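(* Let $\mathcal C$ be a pointed category with finite coproducts and $F\colon\mathcal C\to Gr$ a reduced functor. Then there is a natural isomorphism $\theta^F\colon T_1(IF)\to T_1F$ with $\theta^F(t_1(x-1))=t_1(x)$ for $X\in\mathcal C$ and $x\in F(X)$.
   Context: - $IF\colon\mathcal C\to Ab$ is the functor sending $X$ to the augmentation ideal $I(F(X))$ of the group ring $\mathbb Z[F(X)]$, i.e. the kernel of the augmentation $\mathbb Z[F(X)]\to\mathbb Z$. - For a reduced functor $G$ (to groups or abelian groups), $cr_2G(X,X)=\ker(G(X\vee X)\to G(X)\times G(X))$, induced by the retractions. - $T_1G(X)$ is the quotient of $G(X)$ by the (normal) image of $cr_2G(X,X)\subseteq G(X\vee X)$ under $G(\nabla)$, where $\nabla$ is the folding map; $t_1$ is the projection. $F$ is reduced if $F(0)$ is trivial. *)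

From HB Require Import structures.
From mathcomp Require Import all_boot all_algebra.
From mathcomp Require Import finmap monalg.

Set Implicit Arguments.
Unset Strict Implicit.
Unset Printing Implicit Defensive.

Import GRing.Theory.

Record category := Category {
  Obj :> Type;
  Hom : Obj -> Obj -> Type;
  idm : forall X, Hom X X;
  comp : forall X Y Z, Hom Y Z -> Hom X Y -> Hom X Z;
  comp_idl : forall X Y (f : Hom X Y), comp (idm Y) f = f;
  comp_idr : forall X Y (f : Hom X Y), comp f (idm X) = f;
  comp_assoc : forall X Y Z W (h : Hom Z W) (g : Hom Y Z) (f : Hom X Y),
      comp h (comp g f) = comp (comp h g) f
}.
Arguments idm {c} X.
Arguments comp {c X Y Z}.

(* A pointed category with finite coproducts: a zero object (initial and
   terminal), which is in particular the empty coproduct, and chosen binary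
   coproducts X \/ Y with their universal property. *)
Record pointed_cat := PointedCat {
  pc_cat :> category;
  zero_obj : pc_cat;
  to_zero : forall X : pc_cat, Hom X zero_obj;
  from_zero : forall X : pc_cat, Hom zero_obj X;
  to_zero_uniq : forall (X : pc_cat) (f : Hom X zero_obj), f = to_zero X;
  from_zero_uniq : forall (X : pc_cat) (f : Hom zero_obj X), f = from_zero X;
  coprod : pc_cat -> pc_cat -> pc_cat;
  inj1 : forall X Y : pc_cat, Hom X (coprod X Y);
  inj2 : forall X Y : pc_cat, Hom Y (coprod X Y);
  copair : forall X Y Z : pc_cat, Hom X Z -> Hom Y Z -> Hom (coprod X Y) Z;
  copair_inj1 : forall X Y Z (f : Hom X Z) (g : Hom Y Z),
      comp (copair f g) (inj1 X Y) = f;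
  copair_inj2 : forall X Y Z (f : Hom X Z) (g : Hom Y Z),
      comp (copair f g) (inj2 X Y) = g;
  copair_uniq : forall X Y Z (h : Hom (coprod X Y) Z),
      h = copair (comp h (inj1 X Y)) (comp h (inj2 X Y))
}.
Arguments copair {p X Y Z}.

Section PointedDefs.
Variable C : pointed_cat.

Definition zero_mor (X Y : C) : Hom X Y := comp (from_zero Y) (to_zero X).

Definition retr1 (X : C) : Hom (coprod X X) X := copair (idm X) (zero_mor X X).
Definition retr2 (X : C) : Hom (coprod X X) X := copair (zero_mor X X) (idm X).
Definition fold_map (X : C) : Hom (coprod X X) X := copair (idm X) (idm X).
End PointedDefs.

Record gr_functor (C : category) := GrFunctor {
  Fobj :> C -> groupType;
  Fmap : forall X Y : C, Hom X Y -> Fobj X -> Fobj Y;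
  Fmap_mul : forall X Y (f : Hom X Y) (x y : Fobj X),
      Fmap f (x * y)%g = (Fmap f x * Fmap f y)%g;
  Fmap_one : forall X Y (f : Hom X Y), Fmap f 1%g = 1%g;
  Fmap_id : forall X (x : Fobj X), Fmap (idm X) x = x;
  Fmap_comp : forall X Y Z (g : Hom Y Z) (f : Hom X Y) (x : Fobj X),
      Fmap (comp g f) x = Fmap g (Fmap f x)
}.
Arguments Fmap {C} _ {X Y}.

Definition reduced (C : pointed_cat) (F : gr_functor C) : Prop :=
  forall x : F (zero_obj C), x = 1%g.

Definition normal_subgroup (G : groupType) (N : G -> Prop) : Prop :=
  [/\ N 1%g,
      (forall x y, N x -> N y -> N (x * y)%g),
      (forall x, N x -> N (x^-1)%g) &
      (forall x g, N x -> N (g^-1 * x * g)%g)].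

Definition normal_closure (G : groupType) (S : G -> Prop) : G -> Prop :=
  fun x => forall N, normal_subgroup N -> (forall s, S s -> N s) -> N x.

Section T1Gr.
Variables (C : pointed_cat) (F : gr_functor C).

(* cr_2 F (X, X) = ker (F(X \/ X) -> F(X) x F(X)) *)
Definition cr2 (X : C) : F (coprod X X) -> Prop :=
  fun u => Fmap F (retr1 X) u = 1%g /\ Fmap F (retr2 X) u = 1%g.

Definition T1_kernel (X : C) : F X -> Prop :=
  normal_closure (fun y => exists2 u, cr2 u & y = Fmap F (fold_map X) u).

(* equality in T_1 F (X) = F(X) / T1_kernel X, on representatives:
   t_1 x = t_1 y  <->  x y^-1 in the kernel *)
Definition T1_eq (X : C) (x y : F X) : Prop := T1_kernel (x * y^-1)%g.
End T1Gr.
Arguments cr2 {C} F {X}.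
Arguments T1_kernel {C} F {X}.
Arguments T1_eq {C} F {X}.

(* The functor IF : C -> Ab.  Z[G] is the group ring (only its additive
   group is used), realised as the free Z-module {malg int[G]}. *)

Local Open Scope ring_scope.

Definition ZG (G : groupType) := {malg int[G]}.

Definition Zmap (G H : groupType) (f : G -> H) (a : ZG G) : ZG H :=
  \sum_(k <- msupp a) << a@_k *g f k >>.

Definition augm (G : groupType) (a : ZG G) : int := \sum_(k <- msupp a) a@_k.

Definition aug_ideal (G : groupType) (a : ZG G) : Prop := augm a = 0.

Section T1IF.
Variables (C : pointed_cat) (F : gr_functor C).

Definition IF (X : C) : ZG (F X) -> Prop := @aug_ideal (F X).
Definition IFmap (X Y : C) (f : Hom X Y) : ZG (F X) -> ZG (F Y) :=
  Zmap (Fmap F f).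

Definition subgroup_closure (G : zmodType) (S : G -> Prop) : G -> Prop :=
  fun x => forall N : G -> Prop, N 0 -> (forall a b, N a -> N b -> N (a - b)) ->
            (forall s, S s -> N s) -> N x.

Definition cr2_IF (X : C) : ZG (F (coprod X X)) -> Prop :=
  fun u => [/\ IF u, IFmap (retr1 X) u = 0 & IFmap (retr2 X) u = 0].

(* image of cr_2 IF (X,X) in IF(X) under IF(fold) (normal since abelian) *)
Definition T1IF_kernel (X : C) : ZG (F X) -> Prop :=
  subgroup_closure (fun y => exists2 u, cr2_IF u & y = IFmap (fold_map X) u).

Definition T1IF_eq (X : C) (a b : ZG (F X)) : Prop := T1IF_kernel (a - b).
End T1IF.
Arguments IF {C} F {X}.
Arguments IFmap {C} F {X Y}.
Arguments cr2_IF {C} F {X}.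
Arguments T1IF_kernel {C} F {X}.
Arguments T1IF_eq {C} F {X}.

(* A natural isomorphism theta : T_1(IF) -> T_1 F with
   theta (t_1 (x - 1)) = t_1 x, presented on representatives: theta X maps a
   representative a in IF(X) to a representative in F(X); it must be
   well defined on classes, additive -> multiplicative, bijective on classes,
   natural, and satisfy the formula. *)
Definition T1_natural_iso (C : pointed_cat) (F : gr_functor C)
    (theta : forall X : C, ZG (F X) -> F X) : Prop :=
  [/\
      (forall X (a b : ZG (F X)), IF F a -> IF F b ->
          T1IF_eq F a b -> T1_eq F (theta X a) (theta X b)),
      (forall X (a b : ZG (F X)), IF F a -> IF F b ->
          T1_eq F (theta X (a + b)) (theta X a * theta X b)%g),
      (forall X (a b : ZG (F X)), IF F a -> IF F b ->
          T1_eq F (theta X a) (theta X b) -> T1IF_eq F a b),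
      (forall X (y : F X), exists2 a, IF F a & T1_eq F (theta X a) y) &
      ((
      forall X Y (f : Hom X Y) (a : ZG (F X)), IF F a ->
          T1_eq F (Fmap F f (theta X a)) (theta Y (IFmap F f a))) /\
      (forall X (x : F X), T1_eq F (theta X (<< x >> - << 1%g >>)) x))].

(* The inverse of theta is induced by psi : x |-> x - 1.  Both maps descend to
   T_1 because T_1 kills exactly the cross effects.  For psi, the defect
   psi(xy) - psi(x) - psi(y) is the folding image of the cross effect
   (i1 x)(i2 y) - i1 x - i2 y + 1 of IF(X \/ X).  For theta, an element w of
   F(X \/ X) differs from an element of cr_2 F(X, X) by the injected images of
   its two retractions, and these vanish in T_1 F when w is theta of an
   element of cr_2 IF(X, X).  Since commutators [x, y] are folded cross
   effects, T_1 F is abelian, so theta(sum_k a_k k) = prod_k k^(a_k) is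
   well defined and additive there; finally theta and psi are mutually
   inverse because a = sum_k a_k (k - 1) for a in the augmentation ideal. *)

From Pilot Require Import Defs.
From HB Require Import structures.
From mathcomp Require Import all_boot all_algebra zify.
From mathcomp Require Import finmap monalg.
From Stdlib Require Import Setoid Morphisms.

Set Implicit Arguments.
Unset Strict Implicit.
Unset Printing Implicit Defensive.

Import GRing.Theory.
Local Open Scope ring_scope.

Section IntegerPowers.
Variable G : groupType.
Local Open Scope group_scope.
Implicit Types x : G.

Definition expgz x (z : int) : G :=
  match z with Posz n => x ^+ n | Negz n => x ^- n.+1 end.

Lemma expgzS x z : expgz x (z + 1)%R = expgz x z * x.
Proof.
case: z => [n|[|m]].
- have -> : (Posz n + 1)%R = n.+1 by lia.
  by rewrite /= expgSr.
- by rewrite /= expg1 mulVg.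
- have -> : (Negz m.+1 + 1)%R = Negz m by rewrite !NegzE; lia.
  by rewrite /= [x ^+ m.+2]expgS invgM mulgVK.
Qed.

Lemma expgzDn x (a : int) (n : nat) : expgz x (a + n)%R = expgz x a * x ^+ n.
Proof.
elim: n => [|n IHn]; first by rewrite addr0 mulg1.
have -> : (a + n.+1%:Z = (a + n%:Z) + 1)%R by lia.
by rewrite expgzS IHn expgSr mulgA.
Qed.

Lemma expgzD x (a b : int) : expgz x (a + b)%R = expgz x a * expgz x b.
Proof.
case: b => n; first exact: expgzDn.
have := expgzDn x (a + Negz n)%R n.+1.
by rewrite -addrA NegzE addNr addr0 => ->; rewrite mulgK.
Qed.

End IntegerPowers.

Lemma gmulf_expgz (G H : groupType) (f : UMagmaMorphism.type G H) (x : G) (z : int) :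
  (f (expgz x z) = expgz (f x) z)%g.
Proof. by case: z => n /=; rewrite ?gmulfV gmulfXn. Qed.

Lemma fsubsetU3 (K : choiceType) (A B D : {fset K}) :
  [/\ A `<=` A `|` B `|` D, B `<=` A `|` B `|` D & D `<=` A `|` B `|` D]%fset.
Proof. by split; apply/fsubsetP => k kin; rewrite !inE kin ?orbT. Qed.

Section GroupRing.
Variables (G H : groupType) (f : G -> H).
Implicit Types a b : ZG G.

Lemma ZmapEw a (d : {fset G}) : (msupp a `<=` d)%fset ->
  Zmap f a = \sum_(k <- d) << a@_k *g f k >>.
Proof.
by move=> sad; apply: big_fset_incl => // k _ /mcoeff_outdom ->; rewrite monalgU0.
Qed.

Lemma augmEw a (d : {fset G}) : (msupp a `<=` d)%fset -> augm a = \sum_(k <- d) a@_k.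
Proof. by move=> sad; apply: big_fset_incl => // k _ /mcoeff_outdom. Qed.

Lemma Zmap_is_zmod_morphism : zmod_morphism (Zmap f).
Proof.
move=> a b; have [sa sb sab] := fsubsetU3 (msupp a) (msupp b) (msupp (a - b)).
rewrite (ZmapEw sa) (ZmapEw sb) (ZmapEw sab) -sumrB.
by apply: eq_bigr => k _; rewrite mcoeffB monalgUB.
Qed.

HB.instance Definition _ :=
  GRing.isZmodMorphism.Build (ZG G) (ZG H) (Zmap f) Zmap_is_zmod_morphism.

Lemma augm_is_zmod_morphism : zmod_morphism (@augm G).
Proof.
move=> a b; have [sa sb sab] := fsubsetU3 (msupp a) (msupp b) (msupp (a - b)).
rewrite (augmEw sa) (augmEw sb) (augmEw sab) -sumrB.
by apply: eq_bigr => k _; rewrite mcoeffB.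
Qed.

HB.instance Definition _ :=
  GRing.isZmodMorphism.Build (ZG G) int (@augm G) augm_is_zmod_morphism.

Lemma ZmapU (c : int) (k : G) : Zmap f << c *g k >> = << c *g f k >>.
Proof. by rewrite (ZmapEw msuppU_le) big_seq_fset1 mcoeffUU. Qed.

Lemma augmU (c : int) (k : G) : augm << c *g k >> = c.
Proof. by rewrite (augmEw msuppU_le) big_seq_fset1 mcoeffUU. Qed.
End GroupRing.

Definition psi (G : groupType) (x : G) : ZG G := << x >> - << 1%g >>.

Lemma psi1 (G : groupType) : psi (1%g : G) = 0.
Proof. exact: subrr. Qed.

Lemma augm_psi (G : groupType) (x : G) : augm (psi x) = 0.
Proof. by rewrite raddfB /= !augmU subrr. Qed.

Lemma aug_idealE (G : groupType) (a : ZG G) :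
  augm a = 0 -> a = \sum_(k <- msupp a) psi k *~ a@_k.
Proof.
move=> a0; under eq_bigr do rewrite mulrzBl -!raddfMz /= !intz.
by rewrite sumrB -monalgE -raddf_sum -/(augm a) a0 raddf0 subr0.
Qed.

Lemma Zmap_psi (G H : groupType) (f : UMagmaMorphism.type G H) (x : G) :
  Zmap f (psi x) = psi (f x).
Proof. by rewrite raddfB /= !ZmapU gmulf1. Qed.

Definition eqmod (G : groupType) (N : G -> Prop) (x y : G) : Prop := N (x * y^-1)%g.

Section NormalClosure.
Variables (G : groupType) (S : G -> Prop).
Local Open Scope group_scope.
Local Notation N := (normal_closure S).
Local Notation "x == y" := (eqmod N x y) : type_scope.
Implicit Types x y z : G.

Lemma normal_closure1 : N 1.
Proof. by move=> M []. Qed.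

Lemma normal_closureM x y : N x -> N y -> N (x * y).
Proof.
by move=> Nx Ny M nM SM; case: (nM) => _ MM _ _; exact: MM (Nx M nM SM) (Ny M nM SM).
Qed.

Lemma normal_closureV x : N x -> N x^-1.
Proof. by move=> Nx M nM SM; case: (nM) => _ _ MV _; exact: MV (Nx M nM SM). Qed.

Lemma normal_closureJ x g : N x -> N (g^-1 * x * g).
Proof. by move=> Nx M nM SM; case: (nM) => _ _ _ MJ; exact: MJ (Nx M nM SM). Qed.

Lemma normal_closure_gen x : S x -> N x.
Proof. by move=> Sx M _; apply. Qed.

Lemma eqmod1 x : x == 1 <-> N x.
Proof. by rewrite /eqmod invg1 mulg1. Qed.

Lemma eqmod_trans x y z : x == y -> y == z -> x == z.
Proof. by move=> xy /(normal_closureM xy); rewrite /eqmod mulgA mulgVK. Qed.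

Lemma eqmod_sym x y : x == y -> y == x.
Proof. by move/normal_closureV; rewrite /eqmod invgM invgK. Qed.

Lemma eqmod_refl x : x == x.
Proof. by rewrite /eqmod mulgV; apply: normal_closure1. Qed.

#[global] Instance eqmod_equiv : Equivalence (eqmod N).
Proof. by split; [exact: eqmod_refl | exact: eqmod_sym | exact: eqmod_trans]. Qed.

Lemma eqmod_in x y : x == y -> N y -> N x.
Proof. by move=> xy /eqmod1 y1; apply/eqmod1; rewrite xy. Qed.

#[global] Instance normal_closure_eqmod : Proper (eqmod N ==> iff) N.
Proof. by move=> x y xy; split; apply: eqmod_in; [apply: eqmod_sym|]. Qed.

Lemma eqmodM x x' y y' : x == x' -> y == y' -> x * y == x' * y'.
Proof.
move=> xx' /(normal_closureJ x^-1) /normal_closureM /(_ xx').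
by rewrite /eqmod invgK invgM !mulgA mulgVK.
Qed.

#[global] Instance mulg_eqmod :
  Proper (eqmod N ==> eqmod N ==> eqmod N) (@monoid.mul G).
Proof. by move=> x x' xx' y y' yy'; apply: eqmodM. Qed.

Lemma eqmodV x y : x == y -> x^-1 == y^-1.
Proof.
move=> /normal_closureV /(normal_closureJ x).
by rewrite /eqmod invgM !invgK !mulgA mulgVK.
Qed.

#[global] Instance invg_eqmod : Proper (eqmod N ==> eqmod N) (@monoid.inv G).
Proof. by move=> x y; apply: eqmodV. Qed.

Lemma eq_prod_eqmod (I : Type) (r : seq I) (F F' : I -> G) :
  (forall i, F i == F' i) -> \prod_(i <- r) F i == \prod_(i <- r) F' i.
Proof.
move=> FF'; elim: r => [|i r IHr]; first by rewrite !big_nil; reflexivity.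
by rewrite !big_cons FF' IHr; reflexivity.
Qed.

End NormalClosure.

Definition theta (G : groupType) (a : ZG G) : G :=
  (\prod_(k <- msupp a) expgz k a@_k)%g.

Section Abelianization.
Variables (G : groupType) (S : G -> Prop).
Local Open Scope group_scope.
Local Notation N := (normal_closure S).
Local Notation "x == y" := (eqmod N x y) : type_scope.
Hypothesis eqmodC : forall x y : G, x * y == y * x.

Lemma prodM_eqmod (I : Type) (r : seq I) (F F' : I -> G) :
  \prod_(i <- r) (F i * F' i) == \prod_(i <- r) F i * \prod_(i <- r) F' i.
Proof.
elim: r => [|i r IHr]; first by rewrite !big_nil mulg1; reflexivity.
rewrite !big_cons IHr !mulgA -[F i * F' i * _]mulgA (eqmodC (F' i)) !mulgA.
reflexivity.
Qed.

Lemma perm_prod_eqmod (I : eqType) (r s : seq I) (F : I -> G) :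
  perm_eq r s -> \prod_(i <- r) F i == \prod_(i <- s) F i.
Proof.
elim: r s => [|i r IHr] s rs.
  by move: rs; rewrite perm_sym => /perm_nilP ->; reflexivity.
have si : i \in s by rewrite -(perm_mem rs) mem_head.
case/splitPr: si rs => s1 s2 rs.
have /IHr IHs : perm_eq r (s1 ++ s2).
  by rewrite -(perm_cons i) (perm_trans rs) // -cat1s perm_catCA.
by rewrite big_cons IHs !big_cat big_cons /= mulgA (eqmodC (F i)) !mulgA; reflexivity.
Qed.

Lemma prod_incl_eqmod (I : eqType) (r s : seq I) (F : I -> G) :
  uniq r -> uniq s -> {subset r <= s} -> (forall i, i \notin r -> F i = 1) ->
  \prod_(i <- r) F i == \prod_(i <- s) F i.
Proof.
move=> r_uniq s_uniq rs F1.
rewrite -(big_rmcond _ s (P := mem r)) // -big_filter.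
apply: perm_prod_eqmod; apply: uniq_perm => //.
  exact: filter_uniq.
by move=> i; rewrite mem_filter andb_idr //; apply: rs.
Qed.

Lemma thetaEw (a : ZG G) (d : {fset G}) : (msupp a `<=` d)%fset ->
  theta a == \prod_(k <- d) expgz k a@_k.
Proof.
move=> sad; apply: prod_incl_eqmod => //; first by move=> k /(fsubsetP sad).
by move=> k /mcoeff_outdom ->.
Qed.

Lemma thetaD (a b : ZG G) : theta (a + b)%R == theta a * theta b.
Proof.
have [sa sb sab] := fsubsetU3 (msupp a) (msupp b) (msupp (a + b)).
rewrite (thetaEw sa) (thetaEw sb) (thetaEw sab) -prodM_eqmod.
by apply: eq_prod_eqmod => k; rewrite mcoeffD expgzD; reflexivity.
Qed.

Lemma theta0 : theta (0%R : ZG G) == 1.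
Proof. by rewrite /theta msupp0 big_nil; reflexivity. Qed.

Lemma thetaN (a : ZG G) : theta (- a)%R == (theta a)^-1.
Proof.
rewrite -[theta (- a)%R]mul1g -(mulVg (theta a)) -mulgA -thetaD subrr theta0.
by rewrite mulg1; reflexivity.
Qed.

Lemma thetaB (a b : ZG G) : theta (a - b)%R == theta a * (theta b)^-1.
Proof. by rewrite thetaD thetaN; reflexivity. Qed.

Lemma thetaU (c : int) (k : G) : theta << c *g k >> == expgz k c.
Proof. by rewrite (thetaEw msuppU_le) big_seq_fset1 mcoeffUU; reflexivity. Qed.

Lemma theta_sum (I : Type) (r : seq I) (E : I -> ZG G) :
  theta (\sum_(i <- r) E i)%R == \prod_(i <- r) theta (E i).
Proof.
elim: r => [|i r IHr]; first by rewrite !big_nil theta0; reflexivity.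
by rewrite !big_cons thetaD IHr; reflexivity.
Qed.

Lemma theta_Zmap (G' : groupType) (f : UMagmaMorphism.type G' G) (a : ZG G') :
  f (theta a) == theta (Zmap f a).
Proof.
rewrite theta_sum gmulf_prod; apply: eq_prod_eqmod => k.
by rewrite thetaU gmulf_expgz; reflexivity.
Qed.

Lemma theta_psi (x : G) : theta (psi x) == x.
Proof. by rewrite thetaB !thetaU /= expg1 invg1 mulg1; reflexivity. Qed.
End Abelianization.

Definition eqmodz (V : zmodType) (K : V -> Prop) (a b : V) : Prop := K (a - b).

Section AdditiveCongruence.
Variables (V : zmodType) (S : V -> Prop).
Local Notation K := (subgroup_closure S).
Local Notation "a == b" := (eqmodz K a b) : type_scope.
Implicit Types a b c : V.

Lemma subgroup_closure0 : K 0.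
Proof. by move=> N N0. Qed.

Lemma subgroup_closureB a b : K a -> K b -> K (a - b).
Proof. by move=> Ka Kb N N0 NB NS; exact: NB (Ka N N0 NB NS) (Kb N N0 NB NS). Qed.

Lemma subgroup_closureN a : K a -> K (- a).
Proof. by rewrite -sub0r; apply: subgroup_closureB subgroup_closure0. Qed.

Lemma subgroup_closureD a b : K a -> K b -> K (a + b).
Proof.
by move=> Ka /subgroup_closureN Kb; rewrite -[b]opprK; apply: subgroup_closureB.
Qed.

Lemma subgroup_closure_gen a : S a -> K a.
Proof. by move=> Sa N N0 NB NS; exact: NS. Qed.

Lemma eqmodz0 a : a == 0 <-> K a.
Proof. by rewrite /eqmodz subr0. Qed.

Lemma eqmodz_refl a : a == a.
Proof. by rewrite /eqmodz subrr. Qed.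

Lemma eqmodz_sym a b : a == b -> b == a.
Proof. by move=> /subgroup_closureN; rewrite /eqmodz opprB. Qed.

Lemma eqmodzD a a' b b' : a == a' -> b == b' -> a + b == a' + b'.
Proof.
by move=> aa' bb'; have := subgroup_closureD aa' bb'; rewrite /eqmodz opprD addrACA.
Qed.

Lemma eqmodz_trans a b c : a == b -> b == c -> a == c.
Proof.
by move=> ab /eqmodz_sym cb; have := subgroup_closureB ab cb; rewrite opprB addrA subrK.
Qed.

#[global] Instance eqmodz_equiv : Equivalence (eqmodz K).
Proof. by split; [exact: eqmodz_refl | exact: eqmodz_sym | exact: eqmodz_trans]. Qed.

Lemma eqmodzN a b : a == b -> - a == - b.
Proof. by move=> /subgroup_closureN; rewrite /eqmodz opprD. Qed.

#[global] Instance addr_eqmodz :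
  Proper (eqmodz K ==> eqmodz K ==> eqmodz K) (@GRing.add V).
Proof. by move=> a a' aa' b b'; apply: eqmodzD. Qed.

#[global] Instance oppr_eqmodz : Proper (eqmodz K ==> eqmodz K) (@GRing.opp V).
Proof. by move=> a b; apply: eqmodzN. Qed.

Lemma eqmodz_in a b : a == b -> K b -> K a.
Proof. by move=> ab /eqmodz0 b0; apply/eqmodz0; apply: eqmodz_trans ab b0. Qed.

Lemma eq_sum_eqmodz (I : Type) (r : seq I) (E E' : I -> V) :
  (forall i, E i == E' i) -> \sum_(i <- r) E i == \sum_(i <- r) E' i.
Proof.
move=> EE'; elim: r => [|i r IHr]; first by rewrite !big_nil; reflexivity.
by rewrite !big_cons; apply: eqmodzD.
Qed.
End AdditiveCongruence.

Section PsiModulo.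
Variables (G : groupType) (S : ZG G -> Prop).
Local Notation K := (subgroup_closure S).
Local Notation "a == b" := (eqmodz K a b) : type_scope.
Hypothesis psiM : forall x y : G, psi (x * y)%g == psi x + psi y.

Lemma psiV x : psi x^-1%g == - psi x.
Proof.
have sum0 : psi x^-1%g + psi x == 0.
  by rewrite -(psi1 G) -(mulVg x); symmetry; apply: psiM.
by rewrite -[psi x^-1%g](addrK (psi x)) sum0 sub0r; reflexivity.
Qed.

Lemma psi_prod (I : Type) (r : seq I) (E : I -> G) :
  psi (\prod_(i <- r) E i)%g == \sum_(i <- r) psi (E i).
Proof.
elim: r => [|i r IHr]; first by rewrite !big_nil psi1; reflexivity.
by rewrite !big_cons psiM IHr; reflexivity.
Qed.

Lemma psi_expgz x z : psi (expgz x z) == psi x *~ z.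
Proof.
have psiX n : psi (x ^+ n)%g == psi x *+ n.
  elim: n => [|n IHn]; first by rewrite expg0 psi1 mulr0n; reflexivity.
  by rewrite expgS psiM IHn mulrS; reflexivity.
case: z => n /=; first by rewrite psiX pmulrn; reflexivity.
by rewrite psiV psiX NegzE mulrNz pmulrn; reflexivity.
Qed.

Lemma psi_theta a : augm a = 0 -> psi (theta a) == a.
Proof.
move=> /aug_idealE {2}->; rewrite psi_prod.
by apply: eq_sum_eqmodz => k; apply: psi_expgz.
Qed.

Lemma normal_psi_preimage : normal_subgroup (fun x => K (psi x)).
Proof.
split=> [|x y Kx Ky|x Kx|x g Kx]; first by rewrite psi1.
- exact: eqmodz_in (psiM x y) (subgroup_closureD Kx Ky).
- exact: eqmodz_in (psiV x) (subgroup_closureN Kx).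
- apply: eqmodz_in Kx; rewrite !psiM psiV addrC addNKr; reflexivity.
Qed.
End PsiModulo.

HB.instance Definition _ (C : category) (F : gr_functor C) (X Y : C) (f : Defs.Hom X Y) :=
  monoid.isMultiplicative.Build (F X) (F Y) (Fmap F f) (@Fmap_mul _ F _ _ f).
HB.instance Definition _ (C : category) (F : gr_functor C) (X Y : C) (f : Defs.Hom X Y) :=
  Multiplicative_isUMagmaMorphism.Build (F X) (F Y) (Fmap F f) (@Fmap_one _ F _ _ f).

Section ReducedFunctor.
Variables (C : pointed_cat) (F : gr_functor C).
Hypothesis F_reduced : reduced F.
Local Open Scope group_scope.

Lemma Fmap_zero_mor (X Y : C) (x : F X) : Fmap F (zero_mor X Y) x = 1.
Proof. by rewrite Fmap_comp (F_reduced (Fmap F _ x)) gmulf1. Qed.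

Lemma Fmap_copair_inj1 (X Y Z : C) (f : Defs.Hom X Z) (g : Defs.Hom Y Z) (x : F X) :
  Fmap F (copair f g) (Fmap F (inj1 X Y) x) = Fmap F f x.
Proof. by rewrite -Fmap_comp copair_inj1. Qed.

Lemma Fmap_copair_inj2 (X Y Z : C) (f : Defs.Hom X Z) (g : Defs.Hom Y Z) (y : F Y) :
  Fmap F (copair f g) (Fmap F (inj2 X Y) y) = Fmap F g y.
Proof. by rewrite -Fmap_comp copair_inj2. Qed.

Local Notation copairE :=
  (Fmap_copair_inj1, Fmap_copair_inj2, Fmap_id, Fmap_zero_mor).

Local Notation "x == y" := (eqmod (T1_kernel F) x y) : type_scope.

Lemma T1_kernel_gen (X : C) (u : F (coprod X X)) :
  cr2 F u -> T1_kernel F (Fmap F (fold_map X) u).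
Proof. by move=> cr2u; apply: normal_closure_gen; exists u. Qed.

Lemma T1_commute (X : C) (x y : F X) : x * y == y * x.
Proof.
pose u := Fmap F (inj1 X X) x * Fmap F (inj2 X X) y *
          (Fmap F (inj2 X X) y * Fmap F (inj1 X X) x)^-1.
have /T1_kernel_gen : cr2 F u.
  by split; rewrite /u /retr1 /retr2 !(gmulfM, gmulfV) /= !copairE ?mulg1 ?mul1g mulgV.
by rewrite /u /fold_map !(gmulfM, gmulfV) /= !copairE.
Qed.

Lemma theta_natural (X Y : C) (f : Defs.Hom X Y) (a : ZG (F X)) :
  Fmap F f (theta a) == theta (IFmap F f a).
Proof. exact: (theta_Zmap (@T1_commute Y) (Fmap F f)). Qed.

Lemma theta_cr2_IF (X : C) (u : ZG (F (coprod X X))) :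
  cr2_IF F u -> T1_kernel F (theta (IFmap F (fold_map X) u)).
Proof.
case=> _ r1u r2u; set w := theta u.
have /eqmod1 K1 : Fmap F (retr1 X) w == 1.
  by rewrite theta_natural r1u theta0; reflexivity.
have /eqmod1 K2 : Fmap F (retr2 X) w == 1.
  by rewrite theta_natural r2u theta0; reflexivity.
(* v lies in cr_2 F(X, X); its folding differs from that of w by the two
   retractions of w. *)
pose v := w * (Fmap F (inj1 X X) (Fmap F (retr1 X) w))^-1 *
             (Fmap F (inj2 X X) (Fmap F (retr2 X) w))^-1.
have /T1_kernel_gen Kv : cr2 F v.
  by split; rewrite /v /retr1 /retr2 !(gmulfM, gmulfV) /= !copairE ?invg1 ?mulg1 mulgV.
have -> : theta (IFmap F (fold_map X) u) ==
          Fmap F (fold_map X) v * Fmap F (retr2 X) w * Fmap F (retr1 X) w.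
  rewrite -theta_natural /v !(gmulfM, gmulfV) /= /fold_map !copairE -/(fold_map X).
  by rewrite !mulgVK; reflexivity.
exact: normal_closureM (normal_closureM Kv K2) K1.
Qed.

Local Notation "a =I b" := (eqmodz (T1IF_kernel F) a b) (at level 70).

Lemma theta_T1IF_kernel (X : C) (c : ZG (F X)) :
  T1IF_kernel F c -> T1_kernel F (theta c).
Proof.
move=> Kc; apply: (Kc (fun c => T1_kernel F (theta c)))
    => [|a b Ka Kb|_ [u cr2u ->]].
- by rewrite theta0; apply: normal_closure1.
- by rewrite (thetaB (@T1_commute X)); apply: normal_closureM Ka (normal_closureV Kb).
- exact: theta_cr2_IF.
Qed.

Lemma psiM_T1IF (X : C) (x y : F X) : psi (x * y) =I psi x + psi y.
Proof.
pose x1 := Fmap F (inj1 X X) x; pose y2 := Fmap F (inj2 X X) y.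
pose u : ZG (F (coprod X X)) := (<< (x1 * y2)%g >> - << x1 >> - << y2 >> + << 1%g >>)%R.
apply: subgroup_closure_gen; exists u.
  split; rewrite /IF /aug_ideal /IFmap /u ?/retr1 ?/retr2 !(raddfD, raddfN) /=
    ?(augmU, ZmapU) /x1 /y2 ?gmulfM /= ?copairE ?gmulf1 ?mulg1 ?mul1g //.
  - by rewrite subrr sub0r addNr.
  - by rewrite [(_ - _ - _)%R]addrAC subrr sub0r addNr.
have -> : IFmap F (fold_map X) u =
          (<< (x * y)%g >> - << x >> - << y >> + << 1%g >>)%R.
  rewrite /IFmap /u /fold_map !(raddfD, raddfN) /= !ZmapU /x1 /y2.
  by rewrite gmulfM /= !copairE gmulf1.
by rewrite /psi opprD !opprB !addrA subrK addrAC.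
Qed.

Lemma psi_T1_kernel (X : C) (x : F X) : T1_kernel F x -> T1IF_kernel F (psi x).
Proof.
move=> Kx; apply: (Kx _ (normal_psi_preimage (@psiM_T1IF X))) => _ [u [r1u r2u] ->].
apply: subgroup_closure_gen; exists (psi u); last by rewrite /IFmap Zmap_psi.
by split; rewrite /IF /aug_ideal ?augm_psi // /IFmap Zmap_psi /= ?r1u ?r2u psi1.
Qed.

Lemma psi_T1_eq (X : C) (x y : F X) : x == y -> psi x =I psi y.
Proof.
move=> /psi_T1_kernel /eqmodz0 xy.
by rewrite -[x](mulgVK y) psiM_T1IF xy add0r; reflexivity.
Qed.
End ReducedFunctor.

Theorem proposition8p5 (C : pointed_cat) (F : gr_functor C) :
  reduced F ->
  exists theta : forall X : C, ZG (F X) -> F X, T1_natural_iso theta.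
Proof.
(* [T1_eq F] only unfolds to [eqmod (T1_kernel F)], so some steps use the
   conversion-checking [exact] rather than ssreflect's [exact:]. *)
move=> F_reduced; have T1C X := T1_commute F_reduced (X := X).
exists (fun X => @theta (F X)); split.
- move=> X a b _ _ /(theta_T1IF_kernel F_reduced).
  by rewrite (thetaB (T1C X)).
- move=> X a b _ _; exact (thetaD (T1C X) a b).
- move=> X a b a0 b0 /(psi_T1_eq F_reduced).
  by rewrite !psi_theta //; apply: psiM_T1IF.
- move=> X y; exists (psi y); first exact: augm_psi.
  exact (theta_psi (T1C X) y).
- split=> [X Y f a _|X x]; first exact: theta_natural.
  exact (theta_psi (T1C X) x).
Qed.
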